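(* Fix $f\in S_1\oplus S_2$ with $f\ne0$. Then $\dim\big(\pi_{1,2}P_\xi(S_3)+[f]\big)=4$ for almost every $\xi\in\mathbb{R}^2$.
   Context: For $j\ge0$, $S_j$ is the real vector space of homogeneous polynomials of degree $j$ in $r,s$; $[\cdot]$ denotes linear span. For $\xi=(a,b)\in\mathbb{R}^2$ and a polynomial $f$, $P_\xi f(r,s)=f(\xi)+\partial_rf(\xi)(r-a)+\partial_sf(\xi)(s-b)+\frac12\partial_{rr}f(\xi)(r-a)^2+\partial_{rs}f(\xi)(r-a)(s-b)+\frac12\partial_{ss}f(\xi)(s-b)^2$ (second-order Taylor polynomial at $\xi$), an element of $S_0\oplus S_1\oplus S_2$. $\pi_{1,2}$ is the projection of $S_0\oplus S_1\oplus S_2$ onto $S_1\oplus S_2$ along $S_0$. *)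

From HB Require Import structures.
From mathcomp Require Import all_boot all_order all_algebra.
From mathcomp Require Import all_classical all_reals all_analysis.
Set Implicit Arguments. Unset Strict Implicit. Unset Printing Implicit Defensive.
Import Order.TTheory GRing.Theory Num.Theory.
Local Open Scope ring_scope.

(* Real polynomials in two variables r, s are represented as
   p : {poly {poly R}}, i.e. polynomials in the (outer) variable s whose
   coefficients are polynomials in the (inner) variable r. *)

Section Bivariate.
Variable R : realType.
Definition bipoly := {poly {poly R}}.

Definition coef2 (p : bipoly) (i k : nat) : R := (p`_k)`_i.

Definition mono2 (i k : nat) : bipoly := ('X^i)%:P * 'X^k.

Definition cst2 (c : R) : bipoly := c%:P%:P.
Definition rvar : bipoly := 'X%:P.
Definition svar : bipoly := 'X.

Definition eval2 (p : bipoly) (xi : R * R) : R := (p.[xi.2%:P]).[xi.1].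

Definition dr (p : bipoly) : bipoly := map_poly (fun q : {poly R} => q^`()) p.
Definition ds (p : bipoly) : bipoly := p^`().

Definition homog (j : nat) (p : bipoly) : Prop :=
  forall i k, (i + k != j)%N -> coef2 p i k = 0.

Definition in_S12 (p : bipoly) : Prop :=
  exists p1 p2, [/\ homog 1 p1, homog 2 p2 & p = p1 + p2].

Definition taylor2 (xi : R * R) (f : bipoly) : bipoly :=
  let ra := rvar - cst2 xi.1 in
  let sb := svar - cst2 xi.2 in
  cst2 (eval2 f xi)
  + cst2 (eval2 (dr f) xi) * ra + cst2 (eval2 (ds f) xi) * sb
  + cst2 (eval2 (dr (dr f)) xi / 2) * ra ^+ 2
  + cst2 (eval2 (ds (dr f)) xi) * ra * sb
  + cst2 (eval2 (ds (ds f)) xi / 2) * sb ^+ 2.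

Definition pi12 (p : bipoly) : bipoly := p - cst2 (coef2 p 0 0).

Definition coord12 (p : bipoly) : 'rV[R]_5 :=
  \row_(j < 5) [:: coef2 p 1 0; coef2 p 0 1; coef2 p 2 0; coef2 p 1 1;
                  coef2 p 0 2]`_j.

(* pi_{1,2} P_xi (S_3) + [f], as a subspace of R^5 (via coord12):
   the span of the images of the monomial basis r^3, r^2 s, r s^2, s^3 of S_3
   together with f. *)
Definition imgS3_plus (xi : R * R) (f : bipoly) : {vspace 'rV[R]_5} :=
  <<[:: coord12 (pi12 (taylor2 xi (mono2 3 0)));
        coord12 (pi12 (taylor2 xi (mono2 2 1)));
        coord12 (pi12 (taylor2 xi (mono2 1 2)));
        coord12 (pi12 (taylor2 xi (mono2 0 3)));
        coord12 f]>>%VS.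
End Bivariate.

From HB Require Import structures.
From mathcomp Require Import all_boot all_order all_algebra.
From mathcomp Require Import all_classical all_reals all_analysis.
From mathcomp Require Import ring lra zify.
Set Implicit Arguments.
Unset Strict Implicit.
Unset Printing Implicit Defensive.
Import Order.TTheory GRing.Theory Num.Theory.
Local Open Scope ring_scope.

(* Work in the coordinates of r, s, r^2, rs, s^2 and fix xi = (a, b) with
   a != 0.  The images of r^3, r^2 s, r s^2 under pi_{1,2} P_xi are triangular
   in the quadratic coordinates, hence independent, while the image of s^3 is
   a combination of them because (s - (b/a) r)^3 vanishes to third order at xi.
   Euler's identity for the first partial derivatives of a cubic shows that the
   two linear forms  x1 + a x3 + (b/2) x4  and  x2 + (a/2) x4 + b x5  vanish on
   pi_{1,2} P_xi(S_3).  So adding f gives dimension 4 as soon as one of these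
   forms is nonzero at f.  For f != 0 in S_1 (+) S_2 the two forms, evaluated
   at f, are affine functions of (a, b) that are not both identically zero, so
   the exceptional xi lie on the line a = 0 or on a line (or nowhere), which is
   Lebesgue-negligible in the plane. *)

Section FunctionalSeparation.
Variables (K : fieldType) (n : nat).
Implicit Types (X : seq 'rV[K]_n) (c : 'cV[K]_n) (x : 'rV[K]_n).

Lemma mulmx_span_eq0 X c x :
  all (fun v => (v *m c) 0 0 == 0) X -> x \in <<X>>%VS -> (x *m c) 0 0 = 0.
Proof.
move=> /allP Xc /(@coord_span _ _ _ (in_tuple X)) ->.
rewrite mulmx_suml summxE big1 // => i _.
by rewrite -scalemxAl mxE (eqP (Xc _ _)) ?mulr0 // mem_nth.
Qed.

Lemma free_cons_mulmx c X x :
  all (fun v => (v *m c) 0 0 == 0) X -> (x *m c) 0 0 != 0 -> free X ->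
  free (x :: X).
Proof.
move=> Xc xc freeX; rewrite free_cons freeX andbT.
by apply: contra xc => /(mulmx_span_eq0 Xc) ->.
Qed.

Lemma span_cons_mem X x : x \in <<X>>%VS -> <<x :: X>>%VS = <<X>>%VS.
Proof. by move=> xX; rewrite span_cons; apply/addv_idPr; rewrite -memvE. Qed.

End FunctionalSeparation.

Section Rows5.
Variable K : realFieldType.

Definition row5 (x1 x2 x3 x4 x5 : K) : 'rV[K]_5 :=
  \row_(j < 5) [:: x1; x2; x3; x4; x5]`_j.

Lemma row5_mulmx_tr x1 x2 x3 x4 x5 y1 y2 y3 y4 y5 :
  (row5 x1 x2 x3 x4 x5 *m (row5 y1 y2 y3 y4 y5)^T) 0 0 =
  x1 * y1 + x2 * y2 + x3 * y3 + x4 * y4 + x5 * y5.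
Proof. by rewrite mxE !big_ord_recl big_ord0 !mxE /= addr0 !addrA. Qed.

Definition cubic_rows (a b : K) : seq 'rV[K]_5 :=
  [:: row5 (- (3 * a ^+ 2)) 0 (3 * a) 0 0;
      row5 (- (2 * a * b)) (- a ^+ 2) b (2 * a) 0;
      row5 (- b ^+ 2) (- (2 * a * b)) 0 (2 * b) a;
      row5 0 (- (3 * b ^+ 2)) 0 0 (3 * b)].

(* For a cubic g, Euler's identity a g_rr + b g_rs = 2 g_r (resp.
   a g_rs + b g_ss = 2 g_s) makes these forms vanish on every cubic row. *)
Definition ann1 (a b : K) : 'cV[K]_5 := (row5 1 0 a (b / 2) 0)^T.
Definition ann2 (a b : K) : 'cV[K]_5 := (row5 0 1 0 (a / 2) b)^T.

Lemma dim_span_cubic_rows a b w : a != 0 ->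
  (w *m ann1 a b) 0 0 != 0 \/ (w *m ann2 a b) 0 0 != 0 ->
  \dim <<rcons (cubic_rows a b) w>> = 4%N.
Proof.
move=> a0 w_ann; rewrite /cubic_rows /=.
set v30 := row5 _ _ _ _ _; set v21 := row5 _ _ _ _ _.
set v12 := row5 _ _ _ _ _; set v03 := row5 _ _ _ _ _.
have free3 : free [:: v12; v21; v30].
  apply: (free_cons_mulmx (c := (row5 0 0 0 0 1)^T));
    last apply: (free_cons_mulmx (c := (row5 0 0 0 1 0)^T));
    last apply: (free_cons_mulmx (c := (row5 0 0 1 0 0)^T)); last exact: nil_free;
    rewrite /= /v12 /v21 /v30 ?row5_mulmx_tr ?(mulr0, mulr1, addr0, add0r) ?eqxx //;
    by rewrite ?mulf_neq0 ?pnatr_eq0.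
have free4 : free [:: w; v12; v21; v30].
  case: w_ann => w_ann; [apply: (free_cons_mulmx (c := ann1 a b)) |
                         apply: (free_cons_mulmx (c := ann2 a b))] => //;
    rewrite /= /v12 /v21 /v30 /ann1 /ann2 !row5_mulmx_tr;
    by apply/and4P; split => //; apply/eqP; field.
have v03_span : v03 \in <<[:: w; v12; v21; v30]>>%VS.
  (* (s - (b/a) r)^3 vanishes to third order at (a, b) *)
  have -> : v03 = 3 * (b / a) *: v12 - 3 * (b / a) ^+ 2 *: v21 + (b / a) ^+ 3 *: v30.
    apply/rowP => j; rewrite !mxE.
    by case: j => [[|[|[|[|[|//]]]]] _] /=; field.
  by apply: rpredD; [apply: rpredB|]; apply: rpredZ; apply: memv_span;
    rewrite !inE eqxx ?orbT.
rewrite (@eq_span _ _ _ (v03 :: [:: w; v12; v21; v30])); last first.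
  by move=> v; rewrite !inE; do !case: eqP.
by rewrite span_cons_mem //; apply/eqP.
Qed.

End Rows5.

Section Bivariate.
Variable R : realType.
Implicit Types (f p q : bipoly R) (a b c : R).

Lemma coef2D p q i k : coef2 (p + q) i k = coef2 p i k + coef2 q i k.
Proof. by rewrite /coef2 !coefD. Qed.

Lemma coef2B p q i k : coef2 (p - q) i k = coef2 p i k - coef2 q i k.
Proof. by rewrite /coef2 !coefB. Qed.

Lemma coef2_cst2 c i k :
  coef2 (cst2 c) i k = if (i == 0) && (k == 0) then c else 0.
Proof.
rewrite /coef2 /cst2 coefC.
by case: (k =P 0) => _; rewrite ?coefC ?andbT ?andbF ?if_same.
Qed.

Lemma coef2_cst2_mono2 c i k i' k' :
  coef2 (cst2 c * mono2 R i k) i' k' = if (i' == i) && (k' == k) then c else 0.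
Proof.
rewrite /coef2 /cst2 /mono2 mulrA -polyCM coefCM coefXn.
case: (k' =P k) => _; rewrite ?andbT ?andbF ?mulr1 ?mulr0 ?coef0 //.
by rewrite coefCM coefXn; case: eqP; rewrite ?mulr1 ?mulr0.
Qed.

Lemma coef2_pi12 p i k : (i + k != 0)%N -> coef2 (pi12 p) i k = coef2 p i k.
Proof. by rewrite /pi12 coef2B coef2_cst2; case: i k => [|?] [|?]; rewrite ?subr0. Qed.

Lemma coord12_pi12 p : coord12 (pi12 p) = coord12 p.
Proof. by rewrite /coord12 !coef2_pi12. Qed.

Lemma coord12_quadratic c0 c1 c2 c3 c4 c5 :
  coord12 (cst2 c0 + cst2 c1 * mono2 R 1 0 + cst2 c2 * mono2 R 0 1
           + cst2 c3 * mono2 R 2 0 + cst2 c4 * mono2 R 1 1 + cst2 c5 * mono2 R 0 2)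
  = row5 c1 c2 c3 c4 c5.
Proof. by rewrite /coord12 !coef2D !coef2_cst2 !coef2_cst2_mono2 /= !(add0r, addr0). Qed.

(* The factors [2 * (_ / 2)] are left uncancelled so that the expansion below
   is a ring identity in {poly {poly R}}, which is not a field. *)
Lemma coord12_pi12_taylor2 a b p :
  let d q := eval2 q (a, b) in
  coord12 (pi12 (taylor2 (a, b) p)) =
  row5 (d (dr p) - 2 * a * (d (dr (dr p)) / 2) - b * d (ds (dr p)))
       (d (ds p) - a * d (ds (dr p)) - 2 * b * (d (ds (ds p)) / 2))
       (d (dr (dr p)) / 2) (d (ds (dr p))) (d (ds (ds p)) / 2).
Proof.
move=> d; rewrite -(coord12_quadratic (d p - d (dr p) * a - d (ds p) * b
  + d (dr (dr p)) / 2 * a ^+ 2 + d (ds (dr p)) * a * b + d (ds (ds p)) / 2 * b ^+ 2)).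
rewrite coord12_pi12 /taylor2 /d /=; congr coord12.
by rewrite /mono2 /rvar /svar /cst2; ring.
Qed.

Lemma dr_cst2_mono2 c i k :
  dr (cst2 c * mono2 R i k) = cst2 (c * i%:R) * mono2 R i.-1 k.
Proof.
rewrite /dr /cst2 /mono2 !mulrA -!polyCM.
apply/polyP => j; rewrite coef_map_id0 ?deriv0 // !coefMXn.
case: ltnP => _; first by rewrite deriv0.
rewrite !coefC; case: eqP => _; last by rewrite deriv0.
by rewrite mul_polyC derivZ derivXn -mul_polyC polyCM polyC_natr -mulrA mulr_natl.
Qed.

Lemma ds_cst2_mono2 c i k :
  ds (cst2 c * mono2 R i k) = cst2 (c * k%:R) * mono2 R i k.-1.
Proof.
rewrite /ds /cst2 /mono2 !mulrA -!polyCM.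
by rewrite mul_polyC derivZ derivXn -mul_polyC !polyCM !polyC_natr -mulr_natl; ring.
Qed.

Lemma eval2_cst2_mono2 c i k a b :
  eval2 (cst2 c * mono2 R i k) (a, b) = c * a ^+ i * b ^+ k.
Proof. by rewrite /eval2 /cst2 /mono2 /= !hornerE. Qed.

Lemma coord12_pi12_taylor2_cubics a b :
  [:: coord12 (pi12 (taylor2 (a, b) (mono2 R 3 0)));
      coord12 (pi12 (taylor2 (a, b) (mono2 R 2 1)));
      coord12 (pi12 (taylor2 (a, b) (mono2 R 1 2)));
      coord12 (pi12 (taylor2 (a, b) (mono2 R 0 3)))] = cubic_rows a b.
Proof.
rewrite -[mono2 R 3 0]mul1r -[mono2 R 2 1]mul1r -[mono2 R 1 2]mul1r.
rewrite -[mono2 R 0 3]mul1r -[1 : bipoly R]/(cst2 1).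
(* without [LHS] the rewrite tries to match, by unfolding, the rows on the right *)
congr [:: _; _; _; _]; rewrite [LHS]coord12_pi12_taylor2.
all: rewrite !(dr_cst2_mono2, ds_cst2_mono2) !eval2_cst2_mono2.
all: by congr row5; rewrite /=; field.
Qed.

Lemma imgS3_plusE a b f :
  imgS3_plus (a, b) f = <<rcons (cubic_rows a b) (coord12 f)>>%VS.
Proof. by rewrite /imgS3_plus -coord12_pi12_taylor2_cubics. Qed.

Lemma coord12_eq0 f : in_S12 f -> coord12 f = 0 -> f = 0.
Proof.
move=> [p1 [p2 [h1 h2 ->]]] /rowP c0.
have := c0 0; have := c0 1; have := c0 2%R; have := c0 3%R; have := c0 4%R.
rewrite !mxE /= => e02 e11 e20 e01 e10.
apply/polyP => k; apply/polyP => i; rewrite !coef0 -/(coef2 _ i k).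
by case: i k => [|[|[|i]]] [|[|[|k]]] //; rewrite coef2D h1 ?h2 ?addr0 //; lia.
Qed.

End Bivariate.

Local Open Scope classical_set_scope.

Section NegligibleLines.
Variable R : realType.
Local Notation mu2 := ((@lebesgue_measure R) \x (@lebesgue_measure R))%E.

Lemma vertical_line_negligible (c : R) : mu2.-negligible [set x : R * R | x.1 = c].
Proof.
exists ([set c] `*` setT); split => //; first exact: measurableX.
by rewrite product_measure1E //; have /= -> := lebesgue_measure_set1 c; rewrite mul0e.
Qed.

Lemma graph_line_negligible (al be ga : R) : be != 0 ->
  mu2.-negligible [set x : R * R | al * x.1 + be * x.2 = ga].
Proof.
move=> be0; exists [set x : R * R | al * x.1 + be * x.2 = ga]; split => //.
- have mf : measurable_fun setT (fun x : R * R => al * x.1 + be * x.2).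
    apply: measurable_realfun.measurable_funD.
      exact: measurable_realfun.measurable_funM (measurable_cst al) measurable_fst.
    exact: measurable_realfun.measurable_funM (measurable_cst be) measurable_snd.
  by have := mf measurableT [set ga] (measurable_set1 ga); rewrite setTI.
- rewrite /product_measure1 /=; apply: integral0_eq => x _ /=.
  have -> : xsection [set x : R * R | al * x.1 + be * x.2 = ga] x =
            [set (ga - al * x) / be].
    apply/seteqP; split => y; rewrite /xsection /= inE /=; first by move=> <-; field.
    by move=> ->; field.
  exact: lebesgue_measure_set1.
Qed.

Lemma affine_zeros_negligible (c al be : R) : [|| c != 0, al != 0 | be != 0] ->
  mu2.-negligible [set x : R * R | c + al * x.1 + be * x.2 = 0].
Proof.
have [be0|be0 _] := eqVneq be 0; last first.
  by apply: negligibleS (graph_line_negligible al (- c) be0) => x /=; lra.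
have [al0|al0 _] := eqVneq al 0; last first.
  apply: negligibleS (vertical_line_negligible (- c / al)) => x /=.
  by rewrite be0 mul0r addr0 => h; apply: (mulfI al0); rewrite mulrCA divff // mulr1; lra.
rewrite al0 be0 orbF => c0; apply: negligibleS (negligible_set0 _) => x /=.
by rewrite !mul0r !addr0 => /eqP; rewrite (negbTE c0).
Qed.

Lemma ann_zeros_negligible (l1 l2 A B C : R) : row5 l1 l2 A B C != 0 ->
  mu2.-negligible [set xi : R * R | (row5 l1 l2 A B C *m ann1 xi.1 xi.2) 0 0 = 0
                                   /\ (row5 l1 l2 A B C *m ann2 xi.1 xi.2) 0 0 = 0].
Proof.
move=> w0; have [g1|g1] := boolP [|| l1 != 0, A != 0 | B / 2 != 0].
  apply: negligibleS (affine_zeros_negligible g1) => xi /= [+ _].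
  by rewrite /ann1 row5_mulmx_tr; lra.
have [g2|g2] := boolP [|| l2 != 0, B / 2 != 0 | C != 0].
  apply: negligibleS (affine_zeros_negligible g2) => xi /= [_].
  by rewrite /ann2 row5_mulmx_tr; lra.
move: g1 g2 w0; rewrite !negb_or !negbK.
move=> /and3P[/eqP-> /eqP-> /eqP B0] /and3P[/eqP-> _ /eqP->].
have -> : B = 0 by lra.
suff -> : row5 0 0 0 0 0 = 0 :> 'rV[R]_5 by rewrite eqxx.
by apply/rowP => -[[|[|[|[|[|//]]]]] ?]; rewrite !mxE.
Qed.

End NegligibleLines.

Theorem lemma7p3 (R : realType) (f : bipoly R) :
  in_S12 f -> f != 0 ->
  {ae ((@lebesgue_measure R) \x (@lebesgue_measure R))%E,
     forall xi : R * R, \dim (imgS3_plus xi f) = 4%N}.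
Proof.
move=> f12 f0.
have w0 : coord12 f != 0 by apply: contra_neq f0; apply: coord12_eq0.
apply: negligibleS (negligibleU (vertical_line_negligible 0) (ann_zeros_negligible w0)).
move=> [a b] /= dim_ne4; have [a0|a0] := eqVneq a 0; [by left | right].
by split; apply: contra_notP dim_ne4 => /eqP ann_ne0;
  rewrite imgS3_plusE; apply: dim_span_cubic_rows => //; [left | right].
Qed.
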